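(* For every $h\ge 2$ and $m\ge h$, the secrecy rate $\frac{h-1}{2}$ is achievable (by a $2$-round protocol) over the directed $(m,h)$-CCN against a $1$-node passive adversary.
   Context: Network model: a graph with unit-capacity edges; each use of an edge carries one symbol of a finite field $\mathbb{F}$ (taken sufficiently large), and entropies are measured in units of $\log|\mathbb{F}|$. A single source $S$ holds a message $\mathcal{W}$ to be multicast to a set of receivers. Each node may use its own private randomness; nodes share no prior common randomness and no side channel. An $N$-round protocol: in each round every edge is used at most once. Decodability: every receiver recovers $\mathcal{W}$ with zero error. Secrecy: $H(\mathcal{W}\mid \mathcal{V}_{\mathcal{A}})=H(\mathcal{W})$, where $\mathcal{V}_{\mathcal{A}}$ is the adversary's view over the whole protocol. The secrecy rate is $H(\mathcal{W})/N$. A $1$-node passive adversary may choose any single node other than the source and the receivers and observes all values delivered to that node; secrecy must hold for every such choice. Directed $(m,h)$-CCN ($m\ge h$): nodes $S$, $S_1,\dots,S_h$, $A_1,\dots,A_m$, $B_1,\dots,B_m$, and $\binom{m}{h}$ receivers, one per $h$-subset of $\{B_1,\dots,B_m\}$. Directed edges: $S\to S_i$ ($1\le i\le h$); $S_i\to A_i$ ($1\le i\le h$); $S_i\to A_j$ for all $1\le i\le h$, $h<j\le m$; $A_j\to B_j$ ($1\le j\le m$); $B_j\to R$ whenever $B_j$ is in the $h$-subset of receiver $R$. *)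

From HB Require Import structures.
From mathcomp Require Import all_boot all_order all_algebra all_field.
Set Implicit Arguments. Unset Strict Implicit. Unset Printing Implicit Defensive.

(* The directed (m,h)-CCN.  Indices are 0-based:                       *)
(*   S_i  (i : 'I_h)  is S_{i+1} of the paper,                          *)
(*   A_j, B_j (j : 'I_m) are A_{j+1}, B_{j+1},                          *)
(*   receivers are indexed by the h-subsets T of {B_1..B_m}.            *)

Definition recv (m h : nat) := {T : {set 'I_m} | #|T| == h}.

Definition node (m h : nat) : finType :=
  ((((unit + 'I_h) + 'I_m) + 'I_m) + recv m h)%type.

Definition nS {m h} : node m h := inl (inl (inl (inl tt))).
Definition nSi {m h} (i : 'I_h) : node m h := inl (inl (inl (inr i))).
Definition nA {m h} (j : 'I_m) : node m h := inl (inl (inr j)).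
Definition nB {m h} (j : 'I_m) : node m h := inl (inr j).
Definition nR {m h} (T : recv m h) : node m h := inr T.

Definition is_source {m h} (u : node m h) : bool :=
  match u with inl (inl (inl (inl _))) => true | _ => false end.
Definition is_receiver {m h} (u : node m h) : bool :=
  match u with inr _ => true | _ => false end.

(* directed edge relation of the (m,h)-CCN:
   S -> S_i ;  S_i -> A_i ;  S_i -> A_j (j > h, 1-based) ;  A_j -> B_j ;
   B_j -> R_T when B_j is in T. *)
Definition is_edge {m h} (u v : node m h) : bool :=
  match u, v with
  | inl (inl (inl (inl _))), inl (inl (inl (inr _))) => true
  | inl (inl (inl (inr i))), inl (inl (inr j)) =>
      (nat_of_ord j == nat_of_ord i) || (h <= nat_of_ord j)
  | inl (inl (inr j)), inl (inr j') => j == j'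
  | inl (inr j), inr T => j \in val T
  | _, _ => false
  end.

Definition edge (m h : nat) : finType :=
  {e : node m h * node m h | is_edge e.1 e.2}.
Definition etail {m h} (e : edge m h) : node m h := (val e).1.
Definition ehead {m h} (e : edge m h) : node m h := (val e).2.

(* Values delivered to node u in rounds 0..t (as a finite function on
   (round, edge); entries for other edges/rounds are set to 0). *)
Definition hist {F : finFieldType} {m h N}
  (ex : 'I_N -> edge m h -> F) (u : node m h) (t : nat)
  : {ffun 'I_N * edge m h -> F} :=
  [ffun p => if (nat_of_ord p.1 <= t) && (ehead p.2 == u) then ex p.1 p.2 else 0%R].

Definition view {F : finFieldType} {m h N}
  (ex : 'I_N -> edge m h -> F) (u : node m h) : {ffun 'I_N * edge m h -> F} :=
  hist ex u N.

(* An N-round protocol over the (m,h)-CCN over F multicasting a message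
   W uniform on F^d (so H(W) = d in units of log|F|), with every node
   holding private randomness uniform on F^k (independent across nodes),
   that is zero-error decodable at every receiver and perfectly secure
   against a 1-node passive adversary sitting at any node other than the
   source and the receivers.
   - exec w r t e : symbol sent on edge e in round t, given message w and
     the randomness r of all nodes;
   - f : the local encoding functions: the symbol on e = (u,v) in round t
     depends only on w (if u = S), u's private randomness, and the symbols
     delivered to u in rounds <= t (within a round symbols propagate along
     the acyclic network). Since the network is acyclic, exec is uniquely
     determined by f.
   - secrecy: the conditional distribution of the adversary's view given
     W = w does not depend on w (i.e. W and the view are independent,
     H(W | V_A) = H(W)). *)
Definition secure_multicast (F : finFieldType) (m h N d : nat) : Prop :=
  exists k : nat,
  exists exec : 'rV[F]_d -> {ffun node m h -> 'rV[F]_k} -> 'I_N -> edge m h -> F,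
  exists f : 'I_N -> edge m h -> option 'rV[F]_d -> 'rV[F]_k ->
             {ffun 'I_N * edge m h -> F} -> F,
    (forall w (r : {ffun node m h -> 'rV[F]_k}) t e,
        exec w r t e =
        f t e (if is_source (etail e) then Some w else None)
              (r (etail e)) (hist (exec w r) (etail e) t))
    /\ (forall R : node m h, is_receiver R ->
          exists dec : 'rV[F]_k -> {ffun 'I_N * edge m h -> F} -> 'rV[F]_d,
          forall w (r : {ffun node m h -> 'rV[F]_k}), dec (r R) (view (exec w r) R) = w)
    /\ (forall a : node m h, ~~ is_source a -> ~~ is_receiver a ->
          forall (w1 w2 : 'rV[F]_d) (v : {ffun 'I_N * edge m h -> F}),
            #|[set r : {ffun node m h -> 'rV[F]_k} | view (exec w1 r) a == v]|
            = #|[set r : {ffun node m h -> 'rV[F]_k} | view (exec w2 r) a == v]|).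

(* Write the message as a polynomial W of degree < h-1; the source draws a
   random polynomial S of degree < h-1 and a random scalar rho, and sets
   G = W + rho X^(h-1) and T = G + X S.  With distinct nonzero points
   alpha_0, ..., alpha_(m-1), the source sends S(alpha_i) to S_i in round 0
   and T(alpha_i) in round 1.  For j < h these pairs travel unchanged down to
   B_j, and any receiver computes G(alpha_j) = T(alpha_j) - alpha_j S(alpha_j);
   for j >= h, node A_j receives (T - alpha_j S)(alpha_i) from every S_i,
   interpolates T - alpha_j S = G + (X - alpha_j) S (of degree < h) and
   forwards G(alpha_j).  A receiver thus knows G at h distinct points, hence G,
   hence W.
   A single intermediate node sees either (S(x), T(x)) or G(x) at one point
   x != 0, or the whole polynomial T - x S.  In each case adding to the source
   randomness a vector depending only on two messages w1, w2 (a correction of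
   rho, or of rho and S) maps its view under w1 onto its view under w2; this
   translation is a bijection of the randomness, so the view has the same
   distribution under every message. *)

From HB Require Import structures.
From mathcomp Require Import all_boot all_order all_algebra all_field.
From mathcomp Require Import zify ring.
Set Implicit Arguments. Unset Strict Implicit. Unset Printing Implicit Defensive.
Import GRing.Theory.
Local Open Scope ring_scope.

Lemma card_fiber_comp (R V : finType) (g : R -> R) (f1 f2 : R -> V) (v : V) :
  injective g -> f2 \o g =1 f1 ->
  #|[set r | f1 r == v]| = #|[set r | f2 r == v]|.
Proof.
move=> g_inj f21; rewrite -[RHS](card_preimset _ g_inj).
by apply: eq_card => r; rewrite !inE -f21.
Qed.

Lemma exists_left_inverse (W R : finType) (V : eqType) (f : W -> R -> V) (w0 : W) :
  (forall w w' r r', f w r = f w' r' -> w = w') ->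
  exists dec : V -> W, forall w r, dec (f w r) = w.
Proof.
move=> f_inj; exists (fun v => odflt w0 [pick w | [exists r, f w r == v]]) => w r.
case: pickP => [w' /existsP [r' /eqP /f_inj] // | /(_ w) /existsP []].
by exists r.
Qed.

Lemma poly_eq_on_uniq (F : idomainType) (P Q : {poly F}) (s : seq F) :
  (size P <= size s)%N -> (size Q <= size s)%N -> uniq s ->
  {in s, forall x, P.[x] = Q.[x]} -> P = Q.
Proof.
move=> sP sQ s_uniq PQ; apply/eqP; rewrite -subr_eq0; apply/eqP.
apply: roots_geq_poly_eq0 s_uniq _; last first.
  by rewrite (leq_trans (size_polyD _ _)) // size_polyN geq_max sP.
by apply/allP => x /PQ; rewrite /root hornerD hornerN => ->; rewrite subrr.
Qed.

Section EvaluationPoints.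
Variable F : finFieldType.

Definition alpha (n : nat) : F := nth 0 (enum (predC1 (0 : F))) n.

Lemma size_enum_nonzero : size (enum (predC1 (0 : F))) = #|F|.-1.
Proof. by rewrite -cardE cardC1. Qed.

Lemma alpha_neq0 n : (n < #|F|.-1)%N -> alpha n != 0.
Proof.
by rewrite -size_enum_nonzero => /(mem_nth 0); rewrite mem_enum inE.
Qed.

Lemma alpha_inj : {in [pred n | n < #|F|.-1]%N &, injective alpha}.
Proof.
move=> n1 n2; rewrite !inE -size_enum_nonzero => n1F n2F /eqP.
by rewrite nth_uniq ?enum_uniq // => /eqP.
Qed.

Definition interp n (x v : 'I_n -> F) (y : F) : F :=
  if [pick c : 'rV[F]_n | [forall i, (rVpoly c).[x i] == v i]] is Some c
  then (rVpoly c).[y] else 0.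

Lemma interpE n (x v : 'I_n -> F) (P : {poly F}) y :
  injective x -> (size P <= n)%N -> (forall i, P.[x i] = v i) ->
  interp x v y = P.[y].
Proof.
move=> x_inj sP Pv; rewrite /interp.
have size_pts : size (map x (enum 'I_n)) = n by rewrite size_map size_enum_ord.
case: pickP => [c /forallP cv | /(_ (poly_rV P))]; last first.
  by rewrite poly_rV_K // => /forallPn [i]; rewrite Pv eqxx.
congr horner; apply: (poly_eq_on_uniq (s := map x (enum 'I_n))).
- by rewrite size_pts size_poly.
- by rewrite size_pts.
- by rewrite map_inj_uniq ?enum_uniq.
- by move=> _ /mapP [i _ ->]; rewrite (eqP (cv i)) Pv.
Qed.

End EvaluationPoints.

Arguments alpha {F}.

Section Encoding.
Variables (F : fieldType) (h : nat).
Hypothesis h_gt0 : (0 < h)%N.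

Definition Wpoly (w : 'rV[F]_(h-1)) : {poly F} := rVpoly w.
Definition Spoly (rs : 'rV[F]_(h-1+1)) : {poly F} := rVpoly (lsubmx rs).
Definition rho (rs : 'rV[F]_(h-1+1)) : F := rsubmx rs 0 0.
Definition Gpoly w rs : {poly F} := Wpoly w + rho rs *: 'X^(h-1).
Definition Tpoly w rs : {poly F} := Gpoly w rs + 'X * Spoly rs.

Lemma size_Spoly rs : (size (Spoly rs) <= h - 1)%N.
Proof. exact: size_poly. Qed.

Lemma size_Gpoly w rs : (size (Gpoly w rs) <= h)%N.
Proof.
rewrite (leq_trans (size_polyD _ _)) // geq_max.
rewrite (leq_trans (size_poly _ _)) ?leq_subr //=.
by rewrite (leq_trans (size_scale_leq _ _)) // size_polyXn subn1 prednK.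
Qed.

Lemma Tpoly_subZ w rs c :
  Tpoly w rs - c *: Spoly rs = Gpoly w rs + ('X - c%:P) * Spoly rs.
Proof. by rewrite /Tpoly mulrBl mul_polyC addrA. Qed.

Lemma size_Tpoly_subZ w rs (c : F) : (size (Tpoly w rs - c *: Spoly rs)%R <= h)%N.
Proof.
rewrite Tpoly_subZ (leq_trans (size_polyD _ _)) // geq_max size_Gpoly /=.
have [-> | S_neq0] := eqVneq (Spoly rs) 0; first by rewrite mulr0 size_poly0.
rewrite size_mul ?polyXsubC_eq0 // size_XsubC add2n /=.
by rewrite (leq_ltn_trans (size_Spoly rs)) // subn1 prednK.
Qed.

Lemma horner_Tpoly_subZ w rs x :
  (Tpoly w rs - x *: Spoly rs).[x] = (Gpoly w rs).[x].
Proof. by rewrite Tpoly_subZ hornerD hornerM hornerXsubC subrr mul0r addr0. Qed.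

Lemma Gpoly_msg_inj w w' rs rs' : Gpoly w rs = Gpoly w' rs' -> w = w'.
Proof.
move=> GG; apply/rowP => i; have := congr1 (fun p : {poly F} => p`_i) GG.
rewrite !coefD !coefZ coefXn /Wpoly !coef_rVpoly_ord.
by rewrite eqn_leq [(h - 1 <= i)%N]leqNgt ltn_ord andbF !mulr0 !addr0.
Qed.

Lemma Spoly_add_row_mx rs A c :
  Spoly (rs + row_mx A c%:M) = Spoly rs + rVpoly A.
Proof. by rewrite /Spoly !raddfD /= row_mxKl. Qed.

Lemma Gpoly_add_row_mx w rs A c :
  Gpoly w (rs + row_mx A c%:M) = Gpoly w rs + c *: 'X^(h-1).
Proof.
by rewrite /Gpoly /rho raddfD /= row_mxKr !mxE eqxx mulr1n scalerDl addrA.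
Qed.

Definition pad_coef w1 w2 (x : F) : F := (Wpoly w1 - Wpoly w2).[x] / x ^+ (h-1).

Definition msg_residue w1 w2 x : {poly F} :=
  Wpoly w1 - Wpoly w2 - pad_coef w1 w2 x *: 'X^(h-1).

Definition pad_shift w1 w2 x : 'rV[F]_(h-1+1) := row_mx 0 (pad_coef w1 w2 x)%:M.

Definition full_shift w1 w2 x : 'rV[F]_(h-1+1) :=
  row_mx (poly_rV (msg_residue w1 w2 x %/ ('X - x%:P))) (pad_coef w1 w2 x)%:M.

Lemma root_msg_residue w1 w2 x : x != 0 -> root (msg_residue w1 w2 x) x.
Proof.
move=> x_neq0; rewrite /root /msg_residue hornerD hornerN hornerZ hornerXn.
by rewrite /pad_coef divfK ?expf_neq0 ?subrr.
Qed.

Lemma Gpoly_add_pad w1 w2 rs A x :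
  Gpoly w2 (rs + row_mx A (pad_coef w1 w2 x)%:M) = Gpoly w1 rs - msg_residue w1 w2 x.
Proof. by rewrite Gpoly_add_row_mx /Gpoly /msg_residue; ring. Qed.

Lemma Spoly_pad_shift w1 w2 x rs : Spoly (rs + pad_shift w1 w2 x) = Spoly rs.
Proof. by rewrite Spoly_add_row_mx linear0 addr0. Qed.

Lemma horner_Gpoly_pad_shift w1 w2 x rs : x != 0 ->
  (Gpoly w2 (rs + pad_shift w1 w2 x)).[x] = (Gpoly w1 rs).[x].
Proof.
by move=> /root_msg_residue /rootP; rewrite Gpoly_add_pad hornerD hornerN => ->; rewrite subr0.
Qed.

Lemma horner_Tpoly_pad_shift w1 w2 x rs : x != 0 ->
  (Tpoly w2 (rs + pad_shift w1 w2 x)).[x] = (Tpoly w1 rs).[x].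
Proof.
move=> x_neq0; rewrite /Tpoly !(hornerD (Gpoly _ _)).
by rewrite horner_Gpoly_pad_shift ?Spoly_pad_shift.
Qed.

Lemma Tpoly_subZ_full_shift w1 w2 x rs : x != 0 ->
  Tpoly w2 (rs + full_shift w1 w2 x) - x *: Spoly (rs + full_shift w1 w2 x)
  = Tpoly w1 rs - x *: Spoly rs.
Proof.
move=> x_neq0; set Q := msg_residue w1 w2 x %/ ('X - x%:P).
have QX : Q * ('X - x%:P) = msg_residue w1 w2 x.
  by rewrite divpK // dvdp_XsubCl root_msg_residue.
have size_Q : (size Q <= h - 1)%N.
  rewrite size_divp ?polyXsubC_eq0 // size_XsubC leq_sub2r //.
  have -> : msg_residue w1 w2 x = Gpoly w1 0 - Gpoly w2 (0 + pad_shift w1 w2 x).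
    by rewrite Gpoly_add_pad opprB addrC subrK.
  by rewrite (leq_trans (size_polyD _ _)) // size_polyN geq_max !size_Gpoly.
rewrite !Tpoly_subZ Gpoly_add_pad Spoly_add_row_mx poly_rV_K //.
by clearbody Q; rewrite -QX mulpK ?polyXsubC_eq0 //; ring.
Qed.

End Encoding.

Section Protocol.
Variables (F : finFieldType) (m h : nat).
Hypotheses (h_gt0 : (0 < h)%N) (h_le_m : (h <= m)%N) (m_lt_F : (m < #|F|)%N).

Definition by_round (t : 'I_2) (a b : F) : F := if t == ord0 then a else b.

Definition relayed (w : 'rV[F]_(h-1)) (rs : 'rV[F]_(h-1+1)) (t : 'I_2) (j : 'I_m) : F :=
  if (j < h)%N then by_round t (Spoly rs).[alpha j] (Tpoly w rs).[alpha j]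
  else by_round t 0 (Gpoly w rs).[alpha j].

Definition sent (w : 'rV[F]_(h-1)) (rs : 'rV[F]_(h-1+1)) (t : 'I_2) (u v : node m h) : F :=
  match u, v with
  | inl (inl (inl (inl _))), inl (inl (inl (inr i))) =>
      by_round t (Spoly rs).[alpha i] (Tpoly w rs).[alpha i]
  | inl (inl (inl (inr i))), inl (inl (inr j)) =>
      if (j < h)%N then by_round t (Spoly rs).[alpha i] (Tpoly w rs).[alpha i]
      else by_round t 0 (Tpoly w rs - alpha j *: Spoly rs).[alpha i]
  | inl (inl (inr j)), inl (inr _) | inl (inr j), inr _ => relayed w rs t j
  | _, _ => 0
  end.

Definition received (H : {ffun 'I_2 * edge m h -> F}) (t : 'I_2) (x y : node m h) : F :=
  if insub (x, y) is Some e then H (t, e) else 0.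

Definition encoder (t : 'I_2) (u v : node m h) (ow : option 'rV[F]_(h-1))
    (rs : 'rV[F]_(h-1+1)) (H : {ffun 'I_2 * edge m h -> F}) : F :=
  match u, v with
  | inl (inl (inl (inl _))), inl (inl (inl (inr i))) =>
      if ow is Some w then by_round t (Spoly rs).[alpha i] (Tpoly w rs).[alpha i] else 0
  | inl (inl (inl (inr i))), inl (inl (inr j)) =>
      if (j < h)%N then received H t nS (nSi i)
      else by_round t 0 (received H ord_max nS (nSi i) - alpha j * received H ord0 nS (nSi i))
  | inl (inl (inr j)), inl (inr _) =>
      if insub (val j) is Some i then received H t (nSi i) (nA j)
      else by_round t 0 (interp (fun i : 'I_h => alpha i)
                                (fun i => received H ord_max (nSi i) (nA j)) (alpha j))
  | inl (inr j), inr _ => received H t (nA j) (nB j)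
  | _, _ => 0
  end.

(* The run in closed form; [exec_consistent] shows that it is the run of the
   local rules [protocol]. *)
Definition exec w (r : {ffun node m h -> 'rV[F]_(h-1+1)}) (t : 'I_2) (e : edge m h) : F :=
  sent w (r nS) t (etail e) (ehead e).

Definition protocol (t : 'I_2) (e : edge m h) := encoder t (etail e) (ehead e).

Lemma alpha_ord_neq0 (i : 'I_m) : alpha i != 0 :> F.
Proof. by apply: alpha_neq0; have := ltn_ord i; lia. Qed.

Lemma alpha_ord_inj k : (k <= m)%N -> injective (fun i : 'I_k => alpha i : F).
Proof.
move=> k_le_m i j /alpha_inj ij; apply/val_inj/ij; rewrite inE;
  [have := ltn_ord i | have := ltn_ord j]; lia.
Qed.

Lemma round_neq0 (t : 'I_2) : t != ord0 -> t = ord_max.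
Proof. by case: t => [[|[|]]] // ? _; apply: val_inj. Qed.

Lemma received_hist (ex : 'I_2 -> edge m h -> F) u (t : nat) (t' : 'I_2) x
    (xu : is_edge x u) :
  (t' <= t)%N -> received (hist ex u t) t' x u = ex t' (exist _ (x, u) xu).
Proof.
move=> t't; rewrite /received /hist.
have -> := @insubT _ (fun e : node m h * node m h => is_edge e.1 e.2) (edge m h) (x, u) xu.
by rewrite ffunE /= t't eqxx.
Qed.

Lemma exec_consistent w r t e :
  exec w r t e = protocol t e (if is_source (etail e) then Some w else None)
                   (r (etail e)) (hist (exec w r) (etail e) t).
Proof.
case: e => [[u v] uv]; rewrite /exec /protocol /etail /ehead /=.
move: uv; case: u => [[[[[]|i]|j]|k]|T]; case: v => [[[[[]|i']|j']|k']|T'] //= uv.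
- case: ltnP => j_lt_h; first by rewrite (@received_hist _ (nSi i) t t nS isT).
  rewrite /by_round; case: eqP => // /eqP /round_neq0 ->.
  by rewrite !(@received_hist _ (nSi i) _ _ nS isT) //= hornerD hornerN hornerZ.
- rewrite /relayed; case: insubP => [i j_lt_h ij | j_ge_h].
    have Si_Aj : is_edge (nSi i) (nA j : node m h) by rewrite /= ij eqxx.
    by rewrite (received_hist _ Si_Aj) //= ij j_lt_h.
  rewrite (negbTE j_ge_h) /by_round; case: eqP => // /eqP /round_neq0 ->.
  rewrite (@interpE _ _ _ _ (Tpoly w (r nS) - alpha j *: Spoly (r nS))).
  + by rewrite horner_Tpoly_subZ.
  + exact: alpha_ord_inj.
  + exact: size_Tpoly_subZ.
  move=> i; have Si_Aj : is_edge (nSi i) (nA j : node m h) by rewrite /= leqNgt j_ge_h orbT.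
  by rewrite (received_hist _ Si_Aj) //= (negbTE j_ge_h).
- by rewrite (@received_hist _ (nB k) t t (nA k) (eqxx _)).
Qed.

Lemma received_view (ex : 'I_2 -> edge m h -> F) u (t : 'I_2) x (xu : is_edge x u) :
  received (view ex u) t x u = ex t (exist _ (x, u) xu).
Proof. by rewrite received_hist // ltnW. Qed.

Definition decoded_value (V : {ffun 'I_2 * edge m h -> F}) (T : recv m h) (j : 'I_m) : F :=
  if (j < h)%N
  then received V ord_max (nB j) (nR T) - alpha j * received V ord0 (nB j) (nR T)
  else received V ord_max (nB j) (nR T).

Lemma decoded_valueE w r (T : recv m h) (j : 'I_m) : j \in val T ->
  decoded_value (view (exec w r) (nR T)) T j = (Gpoly w (r nS)).[alpha j].
Proof.
move=> jT; rewrite /decoded_value !(received_view _ _ (jT : is_edge (nB j) (nR T))).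
rewrite /exec /= /relayed /by_round /=.
by case: ltnP => // _; rewrite -horner_Tpoly_subZ hornerD hornerN hornerZ.
Qed.

Lemma view_receiver_inj (T : recv m h) w w' r r' :
  view (exec w r) (nR T) = view (exec w' r') (nR T) -> w = w'.
Proof.
move=> VV; apply: (@Gpoly_msg_inj _ _ _ _ (r nS) (r' nS)).
set s := map (fun j : 'I_m => alpha j : F) (enum (val T)).
have size_s : size s = h by rewrite size_map -cardE (eqP (valP T)).
apply: (poly_eq_on_uniq (s := s)); rewrite ?size_s ?size_Gpoly //.
  by rewrite map_inj_uniq ?enum_uniq //; apply: alpha_ord_inj.
by move=> x /mapP [j]; rewrite mem_enum => jT ->; rewrite -!(decoded_valueE _ _ jT) VV.
Qed.

Definition shift_source (D : 'rV[F]_(h-1+1)) (r : {ffun node m h -> 'rV[F]_(h-1+1)}) :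
  {ffun node m h -> 'rV[F]_(h-1+1)} := [ffun x => if is_source x then r x + D else r x].

Lemma shift_source_inj D : injective (shift_source D).
Proof.
move=> r1 r2 /ffunP r12; apply/ffunP => x; have := r12 x; rewrite !ffunE.
by case: ifP => // _ /addIr.
Qed.

Lemma view_shift_source a w1 w2 D :
  (forall rs t u, is_edge u a -> sent w2 (rs + D) t u a = sent w1 rs t u a) ->
  forall r, view (exec w2 (shift_source D r)) a = view (exec w1 r) a.
Proof.
move=> sentD r; apply/ffunP => [[t [[u v] uv]]].
rewrite /view /hist !ffunE /exec /ehead /etail /= ltnW //.
by case: eqP => //= va; move: uv; rewrite va ffunE => /= /sentD.
Qed.

Lemma sent_pad_shift (w1 w2 : 'rV[F]_(h-1)) rs t x : x != 0 ->
  by_round t (Spoly (rs + pad_shift w1 w2 x)).[x] (Tpoly w2 (rs + pad_shift w1 w2 x)).[x]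
  = by_round t (Spoly rs).[x] (Tpoly w1 rs).[x].
Proof. by move=> x_neq0; rewrite Spoly_pad_shift horner_Tpoly_pad_shift. Qed.

Lemma relayed_pad_shift w1 w2 rs t (j : 'I_m) :
  relayed w2 (rs + pad_shift w1 w2 (alpha j)) t j = relayed w1 rs t j.
Proof.
rewrite /relayed sent_pad_shift ?alpha_ord_neq0 //.
by rewrite horner_Gpoly_pad_shift ?alpha_ord_neq0.
Qed.

Lemma incoming_shift a : ~~ is_source a -> ~~ is_receiver a -> forall w1 w2,
  exists D, forall rs t u, is_edge u a -> sent w2 (rs + D) t u a = sent w1 rs t u a.
Proof.
case: a => [[[[[]|i]|j]|k]|T] //= _ _ w1 w2.
- exists (pad_shift w1 w2 (alpha i)) => rs t [[[[[]|?]|?]|?]|?] //= _.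
  exact: sent_pad_shift (alpha_ord_neq0 (widen_ord h_le_m i)).
- have [j_lt_h | j_ge_h] := ltnP j h.
    exists (pad_shift w1 w2 (alpha j)) => rs t [[[[[]|i]|?]|?]|?] //=.
    rewrite j_lt_h leqNgt j_lt_h orbF => /eqP <-.
    exact: sent_pad_shift (alpha_ord_neq0 j).
  exists (full_shift w1 w2 (alpha j)) => rs t [[[[[]|i]|?]|?]|?] //= _.
  by rewrite ltnNge j_ge_h /= Tpoly_subZ_full_shift ?alpha_ord_neq0.
- exists (pad_shift w1 w2 (alpha k)) => rs t [[[[[]|?]|j]|?]|?] //= /eqP ->.
  exact: relayed_pad_shift.
Qed.

End Protocol.

Local Close Scope ring_scope.

Theorem mainTheorem3 (h m : nat) (hh : 2 <= h) (hm : h <= m) :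
  exists q0 : nat, forall F : finFieldType, q0 <= #|F| ->
    secure_multicast F m h 2 (h - 1).
Proof.
exists m.+1 => F m_lt_F; have h_gt0 : 0 < h by lia.
exists (h - 1 + 1), (@exec F m h), (@protocol F m h); split; [|split].
- exact: exec_consistent.
- case=> // T _.
  have [dec decK] := exists_left_inverse 0%R (view_receiver_inj h_gt0 hm m_lt_F (T := T)).
  by exists (fun _ => dec).
- move=> a a_not_src a_not_rcv w1 w2 v.
  have [D sentD] := incoming_shift h_gt0 hm m_lt_F a_not_src a_not_rcv w1 w2.
  apply: card_fiber_comp (view_shift_source sentD); exact: shift_source_inj.
Qed.
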